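(* Let $x,y$ be positive real numbers with $x\ne y$. For positive integers $d,d_1,d_2$ define \[ \mu_d=(x+y)^d-x^d-y^d,\quad \omega_d=x^d+y^d-2\left(\tfrac{x+y}{2}\right)^d, \] \[ \psi_{d_1,d_2}=x^{d_1}y^{d_2}+x^{d_2}y^{d_1},\quad \phi_{d_1,d_2}=2\left(\tfrac{x+y}{2}\right)^{d_1+d_2}-x^{d_1}y^{d_2}-x^{d_2}y^{d_1}. \] Let $a,b,s,t$ be positive integers with $a\ge 2$ and $b\ge t\ge s\ge a>\binom{b-a}{2}$. Then \[ \frac{\omega_t}{\mu_t}\le\frac{\omega_a}{\mu_a}<\frac{\phi_{s,t}}{\psi_{s,t}}, \] equivalently $\mu_t\omega_a-\mu_a\omega_t\ge 0$ and $\mu_a\phi_{s,t}-\omega_a\psi_{s,t}>0$. *)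

From mathcomp Require Import all_boot all_order all_algebra.
Set Implicit Arguments. Unset Strict Implicit. Unset Printing Implicit Defensive.
Import Order.TTheory GRing.Theory Num.Theory.
Local Open Scope ring_scope.

Definition mu (R : realFieldType) (x y : R) (d : nat) : R :=
  (x + y) ^+ d - x ^+ d - y ^+ d.
Definition omega (R : realFieldType) (x y : R) (d : nat) : R :=
  x ^+ d + y ^+ d - 2 * ((x + y) / 2) ^+ d.
Definition psi (R : realFieldType) (x y : R) (d1 d2 : nat) : R :=
  x ^+ d1 * y ^+ d2 + x ^+ d2 * y ^+ d1.
Definition phi (R : realFieldType) (x y : R) (d1 d2 : nat) : R :=
  2 * ((x + y) / 2) ^+ (d1 + d2) - x ^+ d1 * y ^+ d2 - x ^+ d2 * y ^+ d1.

From mathcomp Require Import all_boot all_order all_algebra ring lra zify.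
Import Order.TTheory GRing.Theory Num.Theory.
Local Open Scope ring_scope.

(* All four quantities are homogeneous and symmetric in x, y, so we may take
   x = 1 + h and y = 1 - h with 0 < h < 1.  Then omega_d = 2^d - 2 - mu_d and
   phi = 2 - psi.  The first inequality says that mu_d / (2^d - 2) is
   nondecreasing in d, which follows from the recurrence for mu and
   Chebyshev's sum inequality.  For the second, psi_{s,t} <= psi_{a,t} =
   (xy)^a (x^k + y^k) with k = t - a, and x^k + y^k <= 2 (1 + h^2)^C(k,2)
   <= 2 (1 + h^2)^(a-1); since (1 - h^2)(1 + h^2) < 1 this gives
   psi_{s,t} < 2xy, while the chord bound (1+h)^a + (1-h)^a <= 2 + (2^a - 2) h^2
   gives mu_a >= (2^a - 2) xy. *)

Section BinaryPowerSums.
Context {R : realFieldType}.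
Implicit Types x y h : R.

Lemma exp2_ge2 n : 2 <= (2 : R) ^+ n.+1.
Proof. by rewrite exprS ler_peMr // exprn_ege1 // ler1n. Qed.

Lemma exp2_gt2 n : 2 < (2 : R) ^+ n.+2.
Proof. by rewrite exprS ltr_pMr // exprn_egt1 // ltr1n. Qed.

Lemma mul_subr_subrXX_ge0 x y n :
  0 <= x -> 0 <= y -> 0 <= (x - y) * (x ^+ n - y ^+ n).
Proof.
move=> x_ge0 y_ge0; have [le_xy | /ltW le_yx] := lerP x y.
- by rewrite mulr_le0 // subr_le0 // lerXn2r.
- by rewrite mulr_ge0 // subr_ge0 // lerXn2r.
Qed.

Lemma chebyshev_sum_powS x y n : 0 <= x -> 0 <= y ->
  (x + y) * (x ^+ n + y ^+ n) <= 2 * (x ^+ n.+1 + y ^+ n.+1).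
Proof.
move=> x_ge0 y_ge0; rewrite -subr_ge0.
have -> : 2 * (x ^+ n.+1 + y ^+ n.+1) - (x + y) * (x ^+ n + y ^+ n)
          = (x - y) * (x ^+ n - y ^+ n) by rewrite !exprS; ring.
exact: mul_subr_subrXX_ge0.
Qed.

Lemma bernoulli_ineq h k : 0 <= h -> 1 + k%:R * h <= (1 + h) ^+ k.
Proof.
move=> h_ge0; elim: k => [|k IH]; first by rewrite mul0r addr0 expr0.
have h1_ge0 : 0 <= 1 + h by lra.
have := ler_wpM2l h1_ge0 IH; rewrite -exprS -natr1.
have : 0 <= k%:R * h * h by rewrite !mulr_ge0.
lra.
Qed.

Lemma even_odd_powS_binom_bound h k : 0 <= h ->
  (1 + h) ^+ k + (1 - h) ^+ k <= 2 * (1 + h ^+ 2) ^+ 'C(k, 2) /\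
  (1 + h) ^+ k - (1 - h) ^+ k <= 2 * k%:R * h * (1 + h ^+ 2) ^+ 'C(k, 2).
Proof.
move=> h_ge0; elim: k => [|k [IHeven IHodd]].
  by rewrite !expr0 /= mulr0 mul0r; lra.
rewrite binS bin1 exprD [(1 + h) ^+ k.+1]exprS [(1 - h) ^+ k.+1]exprS -natr1.
have := bernoulli_ineq _ k (sqr_ge0 h).
have E_ge1 : 1 <= (1 + h ^+ 2) ^+ 'C(k, 2) by rewrite exprn_ege1 // lerDl sqr_ge0.
have K_ge1 : 1 <= (1 + h ^+ 2) ^+ k by rewrite exprn_ege1 // lerDl sqr_ge0.
set E := (1 + h ^+ 2) ^+ 'C(k, 2) in IHeven IHodd E_ge1 *.
set K := (1 + h ^+ 2) ^+ k in K_ge1 *.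
set A := (1 + h) ^+ k in IHeven IHodd *; set B := (1 - h) ^+ k in IHeven IHodd *.
rewrite expr2 => bernoulli_K.
have k_ge0 : 0 <= k%:R :> R by [].
split.
- have := ler_wpM2l h_ge0 IHodd.
  have : 2 * E * (1 + k%:R * (h * h)) <= 2 * E * K by rewrite ler_wpM2l //; lra.
  lra.
- have := ler_wpM2l h_ge0 IHeven.
  have : 2 * (k%:R + 1) * h * E <= 2 * (k%:R + 1) * h * E * K.
    by rewrite ler_peMr // !mulr_ge0 //; lra.
  lra.
Qed.

Lemma even_odd_pow_chord h a : 0 <= h -> h <= 1 ->
  (1 + h) ^+ a.+1 + (1 - h) ^+ a.+1 <= 2 + (2 ^+ a.+1 - 2) * h ^+ 2 /\
  (1 + h) ^+ a.+1 - (1 - h) ^+ a.+1 <= 2 ^+ a.+1 * h.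
Proof.
move=> h_ge0 h_le1; elim: a => [|a [IHeven IHodd]]; first by rewrite !expr1; lra.
have two_le := exp2_ge2 a.
rewrite [2 ^+ a.+2]exprS [(1 + h) ^+ a.+2]exprS [(1 - h) ^+ a.+2]exprS.
set c := 2 ^+ a.+1 in two_le IHeven IHodd *.
set A := (1 + h) ^+ a.+1 in IHeven IHodd *; set B := (1 - h) ^+ a.+1 in IHeven IHodd *.
rewrite expr2 in IHeven *.
have hh_le1 : h * h <= 1 by nra.
split.
- have := ler_wpM2l h_ge0 IHodd.
  lra.
- have := ler_wpM2l h_ge0 IHeven.
  have : h * (2 + (c - 2) * (h * h)) <= h * c by rewrite ler_wpM2l //; nra.
  lra.
Qed.

Lemma muSS x y d : mu x y d.+2 = (x + y) * mu x y d.+1 + x * y * (x ^+ d + y ^+ d).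
Proof. by rewrite /mu ![_ ^+ d.+2]exprS ![_ ^+ d.+1]exprS; ring. Qed.

Lemma mu_ge0 x y d : 0 <= x -> 0 <= y -> 0 <= mu x y d.+1.
Proof.
move=> x_ge0 y_ge0; elim: d => [|d IH]; first by rewrite /mu !expr1; lra.
rewrite muSS; apply: addr_ge0; apply: mulr_ge0 => //.
- exact: addr_ge0.
- exact: mulr_ge0.
- by rewrite addr_ge0 ?exprn_ge0.
Qed.

Lemma mu_gt0 x y d : 0 < x -> 0 < y -> 0 < mu x y d.+2.
Proof.
move=> x_gt0 y_gt0; rewrite muSS ltr_wpDl //.
- by rewrite mulr_ge0 ?mu_ge0 ?addr_ge0 ?ltW.
- by rewrite !mulr_gt0 ?addr_gt0 ?exprn_gt0.
Qed.

Lemma mu_le_sum_pow x y n : 0 <= x -> 0 <= y ->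
  2 * mu x y n.+2 <= (2 ^+ n.+2 - 2) * (x * y) * (x ^+ n + y ^+ n).
Proof.
move=> x_ge0 y_ge0; elim: n => [|n IH]; first by rewrite /mu !expr0 !exprS !expr0; lra.
have c_ge2 := exp2_ge2 n.+1.
rewrite muSS [2 ^+ n.+3]exprS.
set c := 2 ^+ n.+2 in c_ge2 IH *.
have xy_ge0 := mulr_ge0 x_ge0 y_ge0.
have := ler_wpM2l (addr_ge0 x_ge0 y_ge0) IH.
have coef_ge0 : 0 <= (c - 2) * (x * y) by rewrite mulr_ge0 // subr_ge0.
have := ler_wpM2l coef_ge0 (chebyshev_sum_powS _ _ n x_ge0 y_ge0).
lra.
Qed.

Lemma psi_addn x y a k : psi x y a (a + k) = (x * y) ^+ a * (x ^+ k + y ^+ k).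
Proof. by rewrite /psi !exprD exprMn; ring. Qed.

Lemma psiS_le x y s m : 0 <= x -> 0 <= y ->
  2 * psi x y s.+1 (s.+1 + m) <= (x + y) * psi x y s (s.+1 + m).
Proof.
move=> x_ge0 y_ge0; rewrite -subr_ge0.
have -> : (x + y) * psi x y s (s.+1 + m) - 2 * psi x y s.+1 (s.+1 + m)
          = (x * y) ^+ s * ((x - y) * (x ^+ m.+1 - y ^+ m.+1)).
  by rewrite /psi !exprD !exprS exprMn; ring.
by rewrite mulr_ge0 ?mul_subr_subrXX_ge0 // exprn_ge0 // mulr_ge0.
Qed.

Section Normalized.
Variable h : R.
Hypotheses (h_gt0 : 0 < h) (h_lt1 : h < 1).
Local Notation x := (1 + h).
Local Notation y := (1 - h).

Let x_gt0 : 0 < x. Proof. by rewrite addr_gt0 ?ltr01. Qed.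
Let y_gt0 : 0 < y. Proof. by rewrite subr_gt0. Qed.
Let x_ge0 : 0 <= x. Proof. exact: ltW. Qed.
Let y_ge0 : 0 <= y. Proof. exact: ltW. Qed.
Let sum_xy : x + y = 2. Proof. ring. Qed.
Let mul_xy : x * y = 1 - h ^+ 2. Proof. by rewrite expr2; ring. Qed.
Let h2_gt0 : 0 < h ^+ 2. Proof. exact: exprn_gt0. Qed.
Let h2_lt1 : h ^+ 2 < 1. Proof. by rewrite exprn_ilt1 // ltW. Qed.

Lemma omega_1pm d : omega x y d = 2 ^+ d - 2 - mu x y d.
Proof. by rewrite /omega /mu sum_xy divff ?pnatr_eq0 // expr1n mulr1; ring. Qed.

Lemma phi_1pm s t : phi x y s t = 2 - psi x y s t.
Proof. by rewrite /phi /psi sum_xy divff ?pnatr_eq0 // expr1n mulr1; ring. Qed.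

Definition mu_ratio d := mu x y d / (2 ^+ d - 2).

Lemma mu_ratio_gt0 d : 0 < mu_ratio d.+2.
Proof. by rewrite divr_gt0 ?mu_gt0 ?subr_gt0 ?exp2_gt2. Qed.

Lemma mu_ratioSS_le n : mu_ratio n.+2 <= mu_ratio n.+3.
Proof.
have [c_gt2 c'_gt2] := (exp2_gt2 n, exp2_gt2 n.+1).
rewrite /mu_ratio ler_pdivrMr ?subr_gt0 // mulrAC ler_pdivlMr ?subr_gt0 //.
rewrite (muSS _ _ n.+1) sum_xy [2 ^+ n.+3]exprS.
have := mu_le_sum_pow _ _ n x_ge0 y_ge0.
have coef_ge0 : 0 <= (2 ^+ n.+2 - 2) * (x * y) by rewrite mulr_ge0 ?mulr_ge0 // subr_ge0 ltW.
have := chebyshev_sum_powS _ _ n x_ge0 y_ge0; rewrite sum_xy ler_pM2l // => sum_le.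
have := ler_wpM2l coef_ge0 sum_le.
lra.
Qed.

Lemma mu_ratio_nondecreasing :
  {homo (fun n => mu_ratio n.+2) : m n / (m <= n)%N >-> m <= n}.
Proof. exact: homo_leq lexx le_trans mu_ratioSS_le. Qed.

Lemma omega_div_mu d : omega x y d.+2 / mu x y d.+2 = (mu_ratio d.+2)^-1 - 1.
Proof.
by rewrite omega_1pm /mu_ratio invf_div mulrBl divff // gt_eqF // mu_gt0.
Qed.

Lemma omega_div_mu_le a t : (2 <= a)%N -> (a <= t)%N ->
  omega x y t / mu x y t <= omega x y a / mu x y a.
Proof.
case: a => [|[|a]] // _; case: t => [|[|t]] // le_at.
rewrite !omega_div_mu lerD2r lef_pV2 ?posrE ?mu_ratio_gt0 //.
exact: mu_ratio_nondecreasing.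
Qed.

Lemma chord_le_mu a : (2 ^+ a.+1 - 2) * (x * y) <= mu x y a.+1.
Proof.
have [chord _] := even_odd_pow_chord _ a (ltW h_gt0) (ltW h_lt1).
rewrite /mu sum_xy mul_xy; lra.
Qed.

Lemma psi_antitone a s t : (a <= s)%N -> (s <= t)%N -> psi x y s t <= psi x y a t.
Proof.
move=> le_as; rewrite -(subnKC le_as); elim: (s - a)%N => [|j IH] le_t.
  by rewrite addn0.
apply: le_trans (IH _); last by lia.
have := psiS_le _ _ (a + j) (t - (a + j).+1) x_ge0 y_ge0.
rewrite subnKC -?addnS // sum_xy; lra.
Qed.

Lemma psi_lt_2mul a s t : (2 <= a)%N -> (a <= s)%N -> (s <= t)%N ->
  ('C(t - a, 2) < a)%N -> psi x y s t < 2 * (x * y).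
Proof.
move=> le2a le_as le_st binom_lt.
apply: le_lt_trans (psi_antitone _ _ _ le_as le_st) _.
rewrite -(subnKC (leq_trans le_as le_st)) psi_addn mul_xy.
case: a le2a le_as binom_lt => [|[|a]] // _ le_as binom_lt.
set k := (t - a.+2)%N in binom_lt *.
have [even_k _] := even_odd_powS_binom_bound _ k (ltW h_gt0).
have sum_le : x ^+ k + y ^+ k <= 2 * (1 + h ^+ 2) ^+ a.+1.
  apply: le_trans even_k _; rewrite ler_pM2l // ler_weXn2l //.
  by rewrite lerDl ltW.
have prod_lt1 : (1 - h ^+ 2) ^+ a.+1 * (1 + h ^+ 2) ^+ a.+1 < 1.
  have u2_gt0 : 0 < h ^+ 2 * h ^+ 2 by rewrite mulr_gt0.
  rewrite -exprMn exprn_ilt1 //.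
  - by rewrite mulr_ge0 ?subr_ge0 ?addr_ge0 ?ltW.
  - have -> : (1 - h ^+ 2) * (1 + h ^+ 2) = 1 - h ^+ 2 * h ^+ 2 by ring.
    lra.
have P_ge0 : 0 <= (1 - h ^+ 2) ^+ a.+1 by rewrite exprn_ge0 // subr_ge0 ltW.
rewrite exprS -mulrA [2 * _]mulrC ltr_pM2l ?subr_gt0 //.
have := ler_wpM2l P_ge0 sum_le.
lra.
Qed.

Lemma omega_div_mu_lt a s t : (2 <= a)%N -> (a <= s)%N -> (s <= t)%N ->
  ('C(t - a, 2) < a)%N ->
  omega x y a / mu x y a < phi x y s t / psi x y s t.
Proof.
move=> le2a le_as le_st binom_lt.
have psi_lt2 := psi_lt_2mul _ _ _ le2a le_as le_st binom_lt.
have psi_gt0 : 0 < psi x y s t by rewrite addr_gt0 // mulr_gt0 // exprn_gt0.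
case: a le2a le_as binom_lt psi_lt2 => [|[|a]] // _ _ _ psi_lt2.
have M_gt0 := mu_gt0 _ _ a x_gt0 y_gt0.
rewrite omega_div_mu phi_1pm mulrBl divff ?gt_eqF // ltrD2r /mu_ratio invf_div.
rewrite ltr_pdivrMr ?mu_gt0 // mulrAC ltr_pdivlMr //.
have c_gt2 := exp2_gt2 a.
have := chord_le_mu a.+1.
have : (2 ^+ a.+2 - 2) * psi x y s t < (2 ^+ a.+2 - 2) * (2 * (x * y)).
  by rewrite ltr_pM2l // subr_gt0.
lra.
Qed.

End Normalized.

Lemma mu_scale c x y d : mu (c * x) (c * y) d = c ^+ d * mu x y d.
Proof. by rewrite /mu -mulrDr !exprMn; ring. Qed.

Lemma omega_scale c x y d : omega (c * x) (c * y) d = c ^+ d * omega x y d.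
Proof. by rewrite /omega -mulrDr -mulrA !exprMn; ring. Qed.

Lemma psi_scale c x y s t : psi (c * x) (c * y) s t = c ^+ (s + t) * psi x y s t.
Proof. by rewrite /psi !exprMn exprD; ring. Qed.

Lemma phi_scale c x y s t : phi (c * x) (c * y) s t = c ^+ (s + t) * phi x y s t.
Proof. by rewrite /phi -mulrDr -mulrA !exprMn !exprD; ring. Qed.

Lemma omega_div_mu_scale c x y d : c != 0 ->
  omega (c * x) (c * y) d / mu (c * x) (c * y) d = omega x y d / mu x y d.
Proof.
by move=> c_neq0; rewrite omega_scale mu_scale -mulf_div divff ?mul1r ?expf_neq0.
Qed.

Lemma phi_div_psi_scale c x y s t : c != 0 ->
  phi (c * x) (c * y) s t / psi (c * x) (c * y) s t = phi x y s t / psi x y s t.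
Proof.
by move=> c_neq0; rewrite phi_scale psi_scale -mulf_div divff ?mul1r ?expf_neq0.
Qed.

Lemma mu_sym x y d : mu x y d = mu y x d.
Proof. by rewrite /mu [y + x]addrC; ring. Qed.

Lemma omega_sym x y d : omega x y d = omega y x d.
Proof. by rewrite /omega [y + x]addrC; ring. Qed.

Lemma psi_sym x y s t : psi x y s t = psi y x s t.
Proof. by rewrite /psi; ring. Qed.

Lemma phi_sym x y s t : phi x y s t = phi y x s t.
Proof. by rewrite /phi [y + x]addrC; ring. Qed.

Lemma mean_deviation_decomposition x y : 0 < y -> y < x ->
  exists c h, [/\ 0 < c, 0 < h, h < 1, x = c * (1 + h) & y = c * (1 - h)].
Proof.
move=> y_gt0 lt_yx; have sum_gt0 : 0 < x + y by lra.
exists ((x + y) / 2), ((x - y) / (x + y)); split.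
- by rewrite divr_gt0.
- by rewrite divr_gt0 // subr_gt0.
- by rewrite ltr_pdivrMr // mul1r; lra.
- by field; rewrite lt0r_neq0.
- by field; rewrite lt0r_neq0.
Qed.

End BinaryPowerSums.

Theorem proposition3p3 (R : realFieldType) (x y : R) (a b s t : nat) :
  0 < x -> 0 < y -> x != y ->
  (2 <= a)%N -> (t <= b)%N -> (s <= t)%N -> (a <= s)%N -> ('C(b - a, 2) < a)%N ->
  omega x y t / mu x y t <= omega x y a / mu x y a /\
  omega x y a / mu x y a < phi x y s t / psi x y s t.
Proof.
move=> x_gt0 y_gt0 x_neq_y le2a le_tb le_st le_as binom_lt.
wlog lt_yx : x y x_gt0 y_gt0 x_neq_y / y < x.
  move=> main; have [lt_xy | lt_yx | eq_xy] := ltgtP x y.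
  - rewrite !(mu_sym x) !(omega_sym x) (psi_sym x) (phi_sym x).
    by apply: main; rewrite // eq_sym.
  - exact: main.
  - by rewrite eq_xy eqxx in x_neq_y.
have [c [h [c_gt0 h_gt0 h_lt1 -> ->]]] := mean_deviation_decomposition _ _ y_gt0 lt_yx.
have binom_t : ('C(t - a, 2) < a)%N.
  exact: leq_ltn_trans (leq_bin2l _ (leq_sub2r a le_tb)) binom_lt.
rewrite !omega_div_mu_scale ?phi_div_psi_scale ?gt_eqF //.
split; first by apply: omega_div_mu_le => //; apply: leq_trans le_st.
exact: omega_div_mu_lt.
Qed.
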